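(* Let $W$ be an sc-Banach space, $E=\mathbb R^n\oplus W$, $C=[0,\infty)^n\oplus W$, and identify $W$ with $\{0\}\oplus W$. Let $N$ be a finite-dimensional subspace of $E$ in good position to $C$, with good complement $N^\perp$, and let $\widetilde N$ be an algebraic complement of $N\cap W$ in $N$, so that $N=\widetilde N\oplus(N\cap W)$ and $E=\widetilde N\oplus(N\cap W)\oplus N^\perp$. Then $\widetilde N$ is in good position to $C$, and $\widetilde N^\perp=(N\cap W)\oplus N^\perp$ is a good complement of $\widetilde N$ in $E$.
   Context: An sc-Banach space is a Banach space $W$ with nested Banach spaces $W=W_0\supset W_1\supset\cdots$, compact inclusions $W_n\to W_m$ ($m<n$), $\bigcap W_m$ dense in each $W_m$; $E$ has levels $\mathbb R^n\oplus W_m$ and $\|\cdot\|$ is its level-$0$ norm. An sc-complement of a closed subspace $N$ is a closed subspace $N^\perp$ with $E_m=(N\cap E_m)\oplus(N^\perp\cap E_m)$ topologically for all $m$, both pieces sc-subspaces. A closed subspace $N$ is in good position to $C$ if $N\cap C$ has nonempty interior in $N$ and there exist an sc-complement $N^\perp$ and a constant $c>0$ such that for every $(n,m)\in N\oplus N^\perp$ with $\|m\|\le c\|n\|$: $n+m\in C$ iff $n\in C$; such an $N^\perp$ is called a good complement of $N$. *)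

From HB Require Import structures.
From mathcomp Require Import all_boot all_order all_algebra.
From mathcomp Require Import all_classical all_reals all_analysis.
Set Implicit Arguments. Unset Strict Implicit. Unset Printing Implicit Defensive.
Import Order.TTheory GRing.Theory Num.Theory.
Import numFieldNormedType.Exports.
Local Open Scope classical_set_scope.
Local Open Scope ring_scope.

Section Generic.
Context {R : realType} {V : lmodType R}.

Definition lin_subspace (S : set V) : Prop :=
  S 0 /\ forall (a : R) (x y : V), S x -> S y -> S (a *: x + y).

Definition findim_subspace (S : set V) : Prop :=
  exists (k : nat) (v : 'I_k -> V),
    S = [set x | exists a : 'I_k -> R, x = \sum_(i < k) a i *: v i].

Definition conv_in (p : V -> R) (u : nat -> V) (x : V) : Prop :=
  forall e : R, 0 < e -> exists N : nat, forall i, (N <= i)%N -> p (u i - x) < e.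

Definition cauchy_in (p : V -> R) (u : nat -> V) : Prop :=
  forall e : R, 0 < e -> exists N : nat, forall i j, (N <= i)%N -> (N <= j)%N ->
    p (u i - u j) < e.

Definition norm_on (S : set V) (p : V -> R) : Prop :=
  lin_subspace S /\
  (forall x, S x -> 0 <= p x) /\
  (forall x, S x -> p x = 0 -> x = 0) /\
  (forall (a : R) x, S x -> p (a *: x) = `|a| * p x) /\
  (forall x y, S x -> S y -> p (x + y) <= p x + p y).

Definition banach_on (S : set V) (p : V -> R) : Prop :=
  norm_on S p /\
  forall u : nat -> V, (forall i, S (u i)) -> cauchy_in p u ->
    exists x, S x /\ conv_in p u x.

End Generic.

Section SC.
Context {R : realType} {W : normedModType R}.

Definition sc_structure (lev : nat -> set W) (nrm : nat -> W -> R) : Prop :=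
  lev 0%N = setT /\ (forall x, nrm 0%N x = `|x|) /\
  (forall m, banach_on (lev m) (nrm m)) /\
  (* nested, with compact (in particular continuous) inclusions W_k -> W_m, m < k *)
  (forall m k, (m < k)%N ->
     lev k `<=` lev m /\
     (exists K : R, forall x, lev k x -> nrm m x <= K * nrm k x) /\
     (forall u : nat -> W, (forall i, lev k (u i)) ->
        (exists B : R, forall i, nrm k (u i) <= B) ->
        exists (phi : nat -> nat) (x : W),
          (forall i, (phi i < phi i.+1)%N) /\ lev m x /\ conv_in (nrm m) (u \o phi) x)) /\
  (* W_oo = \bigcap_m W_m is dense in each W_m *)
  (forall m x, lev m x -> forall e : R, 0 < e ->
     exists y, (forall k, lev k y) /\ nrm m (x - y) < e).

Definition Espace (n : nat) := ('rV[R]_n * W)%type.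

Variables (n : nat) (lev : nat -> set W) (nrm : nat -> W -> R).

Definition Elev (m : nat) : set (Espace n) := [set x | lev m x.2].

Definition Enrm (m : nat) (x : Espace n) : R := Num.max `|x.1| (nrm m x.2).

Definition Cquad : set (Espace n) := [set x | forall i : 'I_n, 0 <= (x.1 : 'rV[R]_n) ord0 i].

Definition Wsub : set (Espace n) := [set x | x.1 = 0].

Definition sc_subspace (F : set (Espace n)) : Prop :=
  lin_subspace F /\
  (forall m (u : nat -> Espace n) x, (forall i, F (u i) /\ Elev m (u i)) ->
     Elev m x -> conv_in (Enrm m) u x -> F x) /\
  (forall m x, F x -> Elev m x -> forall e : R, 0 < e ->
     exists y, F y /\ (forall k, Elev k y) /\ Enrm m (x - y) < e).

(* Np is an sc-complement of N: E_m = (N \cap E_m) (+) (Np \cap E_m)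
   topologically for all m, both pieces sc-subspaces *)
Definition sc_complement (N Np : set (Espace n)) : Prop :=
  sc_subspace N /\ sc_subspace Np /\
  (forall x, N x -> Np x -> x = 0) /\
  (forall m,
     (forall x, Elev m x -> exists a b, N a /\ Elev m a /\ Np b /\ Elev m b /\ x = a + b) /\
     (exists K : R, forall a b, N a -> Np b -> Elev m a -> Elev m b ->
        Enrm m a <= K * Enrm m (a + b))).

Definition nonempty_interior_in (N : set (Espace n)) : Prop :=
  exists x, N x /\ Cquad x /\
    exists r : R, 0 < r /\ forall y, N y -> Enrm 0 (y - x) < r -> Cquad y.

Definition good_complement (N Np : set (Espace n)) : Prop :=
  sc_complement N Np /\
  exists c : R, 0 < c /\
    forall a b, N a -> Np b -> Enrm 0 b <= c * Enrm 0 a ->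
      (Cquad (a + b) <-> Cquad a).

Definition good_position (N : set (Espace n)) : Prop :=
  nonempty_interior_in N /\ exists Np, good_complement N Np.

Definition alg_complement (Nt M N : set (Espace n)) : Prop :=
  lin_subspace Nt /\ Nt `<=` N /\
  (forall x, Nt x -> M x -> x = 0) /\
  (forall x, N x -> exists a b, Nt a /\ M b /\ x = a + b).

End SC.

Definition set_sum {R : realType} {V : lmodType R} (A B : set V) : set V :=
  [set x | exists a b, A a /\ B b /\ x = a + b].

From HB Require Import structures.
From mathcomp Require Import all_boot all_order all_algebra.
From mathcomp Require Import all_classical all_reals all_analysis.
From mathcomp Require Import ring lra.
Import Order.TTheory GRing.Theory Num.Theory.
Import numFieldNormedType.Exports.
Local Open Scope classical_set_scope.
Local Open Scope ring_scope.

(* A finite-dimensional sc-subspace N lies in E_oo, since N \cap E_oo is a dense linear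
   subspace of N.  As Nt meets W trivially, a |-> a.1 is injective on Nt, so on Nt every
   level norm is bounded by a multiple of |a.1|.  With the boundedness of the projections
   of E_m = N_m (+) Np_m this gives the sc-complement properties of Nt and
   (N \cap W) (+) Np.  Adding an element of N \cap W changes neither the R^n-component nor
   membership in C, so the good-complement estimate for N transfers to Nt once its constant
   is shrunk by these two bounds. *)

Section LinearSubspaces.
Context {R : realType} {V : lmodType R}.
Implicit Types (S : set V) (p : V -> R).

Lemma lin_subspaceD {S x y} : lin_subspace S -> S x -> S y -> S (x + y).
Proof. by move=> [_ Slin] Sx Sy; have := Slin 1 x y Sx Sy; rewrite scale1r. Qed.

Lemma lin_subspaceZ {S} a {x} : lin_subspace S -> S x -> S (a *: x).
Proof. by move=> [S0 Slin] Sx; have := Slin a x 0 Sx S0; rewrite addr0. Qed.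

Lemma lin_subspaceN {S x} : lin_subspace S -> S x -> S (- x).
Proof. by move=> hS Sx; rewrite -scaleN1r; exact: lin_subspaceZ. Qed.

Lemma lin_subspaceDl {S x y} : lin_subspace S -> S x -> S (x + y) -> S y.
Proof.
by move=> hS Sx Sxy; rewrite -(addKr x y); exact: lin_subspaceD hS (lin_subspaceN hS Sx) Sxy.
Qed.

Lemma lin_subspaceB {S x y} : lin_subspace S -> S x -> S y -> S (x - y).
Proof. by move=> hS Sx Sy; apply: lin_subspaceD => //; exact: lin_subspaceN. Qed.

Lemma lin_subspace_sum {S} {I : Type} {r : seq I} {P : pred I} {F : I -> V} :
  lin_subspace S -> (forall i, P i -> S (F i)) -> S (\sum_(i <- r | P i) F i).
Proof.
move=> hS SF; apply: (big_ind S) => [|x y|i Pi];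
  [exact: hS.1 | exact: lin_subspaceD | exact: SF].
Qed.

Lemma lin_subspaceI {S S'} : lin_subspace S -> lin_subspace S' -> lin_subspace (S `&` S').
Proof.
move=> [S0 Slin] [S'0 S'lin]; split=> // a x y [Sx S'x] [Sy S'y].
by split; [exact: Slin | exact: S'lin].
Qed.

Lemma lin_subspace_set_sum {S S'} :
  lin_subspace S -> lin_subspace S' -> lin_subspace (set_sum S S').
Proof.
move=> [S0 Slin] [S'0 S'lin]; split; first by exists 0, 0; rewrite addr0.
move=> a _ _ [s [s' [Ss [S's ->]]]] [t [t' [St [S't ->]]]].
exists (a *: s + t), (a *: s' + t'); split; first exact: Slin.
by split; [exact: S'lin | rewrite scalerDr addrACA].
Qed.

Lemma norm_on0 {S p} : norm_on S p -> p 0 = 0.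
Proof. by move=> [hS [_ [_ [pZ _]]]]; have := pZ 0 0 hS.1; rewrite scale0r normr0 mul0r. Qed.

Lemma norm_on_ge0 {S p x} : norm_on S p -> S x -> 0 <= p x.
Proof. by move=> [_ [p_ge0 _]]; exact: p_ge0. Qed.

Lemma norm_on_eq0 {S p x} : norm_on S p -> S x -> p x = 0 -> x = 0.
Proof. by move=> [_ [_ [p_eq0 _]]]; exact: p_eq0. Qed.

Lemma norm_onZ {S p} a {x} : norm_on S p -> S x -> p (a *: x) = `|a| * p x.
Proof. by move=> [_ [_ [_ [pZ _]]]]; exact: pZ. Qed.

Lemma norm_onD {S p x y} : norm_on S p -> S x -> S y -> p (x + y) <= p x + p y.
Proof. by move=> [_ [_ [_ [_ pD]]]]; exact: pD. Qed.

Lemma norm_onN {S p x} : norm_on S p -> S x -> p (- x) = p x.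
Proof. by move=> hp Sx; rewrite -scaleN1r (norm_onZ _ hp Sx) normrN normr1 mul1r. Qed.

Lemma norm_on_distC {S p x y} : norm_on S p -> S x -> S y -> p (x - y) = p (y - x).
Proof.
by move=> hp Sx Sy; rewrite -opprB (norm_onN hp) //; apply: lin_subspaceB => //; exact: hp.1.
Qed.

Lemma norm_on_dist_le {S p x y} : norm_on S p -> S x -> S y -> `|p x - p y| <= p (x - y).
Proof.
move=> hp Sx Sy; have hS := hp.1.
rewrite ler_norml; apply/andP; split.
  rewrite lerNl opprB lerBlDr (norm_on_distC hp) // -{1}(subrK x y).
  by apply: (norm_onD hp) => //; exact: lin_subspaceB.
rewrite lerBlDr -{1}(subrK y x).
by apply: (norm_onD hp) => //; exact: lin_subspaceB.
Qed.

Lemma conv_in_le0 {p u x} {y K : R} : 0 <= K -> conv_in p u x ->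
  (forall i, y <= K * p (u i - x)) -> y <= 0.
Proof.
move=> K0 ux yK; apply/ler_addgt0Pr => e e0; rewrite add0r.
have K1_gt0 : 0 < K + 1 by rewrite ltr_wpDl.
have [i ui] := ux (e / (K + 1)) (divr_gt0 e0 K1_gt0).
apply: le_trans (yK i) (le_trans (ler_wpM2l K0 (ltW (ui i (leqnn i)))) _).
by rewrite mulrA ler_pdivrMr // mulrDr mulr1 mulrC lerDl ltW.
Qed.

End LinearSubspaces.

Section RowVectors.
Context {R : realType}.

Definition mx_abs_sum {d k} (P : 'M[R]_(d, k)) : R := \sum_i \sum_j `|P i j|.

Lemma mx_abs_sum_ge0 {d k} (P : 'M[R]_(d, k)) : 0 <= mx_abs_sum P.
Proof. by apply: sumr_ge0 => i _; apply: sumr_ge0. Qed.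

Lemma mx_norm_entry_le {d} (c : 'rV[R]_d) i : `|c 0 i| <= `|c|.
Proof.
have -> : `|c| = mx_norm c by [].
by rewrite mx_normrE; apply/bigmax_geP; right; exists (0, i).
Qed.

Lemma mx_norm_le {d} (c : 'rV[R]_d) (b : R) :
  0 <= b -> (forall j, `|c 0 j| <= b) -> `|c| <= b.
Proof.
move=> b0 cb; have -> : `|c| = mx_norm c by [].
by rewrite mx_normrE; apply: bigmax_le => //= -[i j] _; rewrite [i]ord1.
Qed.

Lemma mx_norm_mulmx_le {d k} (x : 'rV[R]_d) (P : 'M[R]_(d, k)) :
  `|x *m P| <= `|x| * mx_abs_sum P.
Proof.
apply: mx_norm_le => [|l]; first by rewrite mulr_ge0 // mx_abs_sum_ge0.
rewrite mxE; apply: (le_trans (ler_norm_sum _ _ _)).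
rewrite mulr_sumr; apply: ler_sum => j _; rewrite normrM.
apply: (@le_trans _ _ (`|x| * `|P j l|)); first by apply: ler_wpM2r => //; apply: mx_norm_entry_le.
apply: ler_wpM2l => //; rewrite (bigD1 l) //= lerDl.
by apply: sumr_ge0.
Qed.

Lemma row_free_near1 d (G : 'M[R]_d) : mx_abs_sum (1%:M - G) < 1 -> row_free G.
Proof.
move=> small; rewrite -kermx_eq0; apply/eqP/row_matrixP => i; rewrite row0.
set c := row i (kermx G).
have cG : c *m G = 0 by rewrite -row_mul mulmx_ker row0.
have : `|c| <= `|c| * mx_abs_sum (1%:M - G).
  by rewrite -{1}[c]subr0 -cG -{1}[c]mulmx1 -mulmxBr mx_norm_mulmx_le.
have := normr_ge0 c => c_ge0 c_le.
by apply/eqP; rewrite -normr_le0; nra.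
Qed.

(* A subspace of R^d that approximates every vector is all of R^d: approximating the
   standard basis closely enough yields rows of an invertible matrix. *)
Lemma dense_lin_subspace_rV d (S : set 'rV[R]_d) :
  lin_subspace S -> (forall c e, 0 < e -> exists t, S t /\ `|t - c| < e) ->
  forall c, S c.
Proof.
move=> hS dense c.
pose eps : R := ((d * d).+1%:R)^-1.
have eps0 : 0 < eps by rewrite invr_gt0 ltr0Sn.
have [t ht] := choice (fun i => dense (delta_mx 0 i) eps eps0).
pose G := \matrix_i t i.
have near1 : mx_abs_sum (1%:M - G) < 1.
  apply: (@le_lt_trans _ _ (\sum_(i < d) \sum_(j < d) eps)).
    apply: ler_sum => i _; apply: ler_sum => j _.
    have -> : (1%:M - G) i j = - (t i - delta_mx 0 i) 0 j by rewrite !mxE eq_sym opprB.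
    by rewrite normrN ltW // (le_lt_trans (mx_norm_entry_le _ j) (ht i).2).
  rewrite !sumr_const !card_ord -mulrnA -mulr_natl ltr_pdivrMr ?ltr0Sn //.
  by rewrite mul1r ltr_nat ltnSn.
have cG : (c <= G)%MS by apply: submx_full; exact: row_free_near1.
rewrite -(mulmxKpV cG) mulmx_sum_row; apply: lin_subspace_sum => // i _.
by rewrite rowK; apply: lin_subspaceZ => //; exact: (ht i).1.
Qed.

Lemma lipschitz_continuous_real {V : normedModType R} {f : V -> R} {L : R} :
  0 < L -> (forall x y, `|f x - f y| <= L * `|x - y|) -> continuous f.
Proof.
move=> L0 fL x; apply/cvgrPdist_lt => e e0; near=> y.
apply: (le_lt_trans (fL x y)); rewrite -ltr_pdivlMl //; near: y.
by rewrite mulrC; apply: cvgr_dist_lt => //; exact: divr_gt0.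
Unshelve. all: by end_near.
Qed.

End RowVectors.

Section LinearCombinations.
Context {R : realType} {V : lmodType R}.
Implicit Types (S : set V) (p : V -> R).

Definition lc {d} (w : 'I_d -> V) (c : 'rV[R]_d) : V := \sum_i c 0 i *: w i.

Definition lspan {d} (w : 'I_d -> V) : set V := [set x | exists c, x = lc w c].

Definition lfree {d} (w : 'I_d -> V) : Prop := forall c, lc w c = 0 -> c = 0.

Section Family.
Context {d : nat} {w : 'I_d -> V}.

Lemma lc0 : lc w 0 = 0.
Proof. by rewrite /lc big1 // => i _; rewrite mxE scale0r. Qed.

Lemma lcD c c' : lc w (c + c') = lc w c + lc w c'.
Proof. by rewrite /lc -big_split; apply: eq_bigr => i _; rewrite mxE scalerDl. Qed.

Lemma lcZ a c : lc w (a *: c) = a *: lc w c.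
Proof. by rewrite /lc scaler_sumr; apply: eq_bigr => i _; rewrite mxE scalerA. Qed.

Lemma lcB c c' : lc w (c - c') = lc w c - lc w c'.
Proof. by rewrite lcD -[- c']scaleN1r lcZ scaleN1r. Qed.

Lemma lc_delta i : lc w (delta_mx 0 i) = w i.
Proof.
rewrite /lc (bigD1 i) //= mxE !eqxx scale1r big1 ?addr0 // => j ji.
by rewrite mxE eqxx (negbTE ji) scale0r.
Qed.

Lemma lin_subspace_lc {S} c : lin_subspace S -> (forall i, S (w i)) -> S (lc w c).
Proof. by move=> hS Sw; apply: lin_subspace_sum => // i _; exact: lin_subspaceZ. Qed.

Lemma norm_on_lc_le {S p} c : norm_on S p -> (forall i, S (w i)) ->
  p (lc w c) <= `|c| * \sum_i p (w i).
Proof.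
move=> hp Sw; rewrite mulr_sumr.
pose P (x : V) (r : R) := S x /\ p x <= r.
suff [] : P (lc w c) (\sum_i `|c| * p (w i)) by [].
apply: (big_ind2 P) => [|x1 x2 r1 r2 [S1 le1] [S2 le2]|i _].
- by split; [exact: hp.1.1 | rewrite (norm_on0 hp)].
- by split; [exact: lin_subspaceD hp.1 S1 S2 | exact: le_trans (norm_onD hp S1 S2) (lerD le1 le2)].
- split; first exact: lin_subspaceZ hp.1 (Sw i).
  rewrite (norm_onZ _ hp (Sw i)); apply: ler_wpM2r; first exact: norm_on_ge0 hp (Sw i).
  exact: mx_norm_entry_le.
Qed.

(* Equivalence of norms in finite dimension: p is bounded below on the unit sphere of
   coefficient vectors, which is compact. *)
Lemma lfree_coord_bounded {S p} : norm_on S p -> (forall i, S (w i)) -> lfree w ->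
  exists K, 0 < K /\ forall c, `|c| <= K * p (lc w c).
Proof.
move=> hp Sw free; have hS := hp.1.
pose f c := p (lc w c).
have f_ge0 c : 0 <= f c by exact: norm_on_ge0 hp (lin_subspace_lc c hS Sw).
pose L := \sum_i p (w i) + 1.
have L0 : 0 < L by rewrite ltr_wpDl // sumr_ge0 // => i _; exact: norm_on_ge0 hp (Sw i).
have f_cont : continuous f.
  apply: (lipschitz_continuous_real L0) => x y.
  apply: le_trans (norm_on_dist_le hp (lin_subspace_lc x hS Sw) (lin_subspace_lc y hS Sw)) _.
  rewrite -lcB mulrC; apply: le_trans (norm_on_lc_le (x - y) hp Sw) _.
  by apply: ler_wpM2l => //; rewrite lerDl.
pose A := [set c : 'rV[R]_d | `|c| = 1].
have A_compact : compact A.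
  apply: bounded_closed_compact.
    by exists 1; split => // M M1 c /= ->; exact: ltW.
  have -> : A = (fun c : 'rV[R]_d => `|c|) @^-1` [set 1] by [].
  by apply: closed_comp => [x _|]; [exact: norm_continuous | exact: closed_eq].
have normalize c : c != 0 -> A (`|c|^-1 *: c).
  by move=> c0; rewrite /A /= normrZ normfV normr_id mulVf // normr_eq0.
have [A0|Aempty] := pselect (A !=set0); last first.
  exists 1; split => // c; have [->|c0] := eqVneq c 0; first by rewrite normr0 mul1r f_ge0.
  by exfalso; apply: Aempty; exists (`|c|^-1 *: c); exact: normalize.
have [c0 Ac0 f_min] := compact_EVT_min A0 A_compact (continuous_subspaceT f_cont).
have f_c0 : 0 < f c0.
  rewrite lt_def f_ge0 andbT; apply/eqP => /(norm_on_eq0 hp (lin_subspace_lc c0 hS Sw)).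
  by move/free => c00; move: Ac0; rewrite inE /A /= c00 normr0 => /eqP; rewrite eq_sym oner_eq0.
exists (f c0)^-1; split; first by rewrite invr_gt0.
move=> c; have [->|cn0] := eqVneq c 0.
  by rewrite normr0; apply: mulr_ge0; [rewrite invr_ge0; exact: ltW | exact: f_ge0].
have := f_min _ (mem_set (normalize c cn0)).
rewrite /f lcZ (norm_onZ _ hp (lin_subspace_lc c hS Sw)) normfV normr_id => le_f.
rewrite -ler_pdivrMl ?invr_gt0 // invrK -ler_pdivlMr ?normr_gt0 // mulrC.
exact: le_f.
Qed.

End Family.

Definition fam_cons {d} (v : V) (w : 'I_d -> V) : 'I_d.+1 -> V :=
  fun j => oapp w v (unlift ord0 j).

Definition row_cons {d} (a : R) (c : 'rV[R]_d) : 'rV[R]_d.+1 :=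
  \row_j oapp (c 0) a (unlift ord0 j).

Definition row_behead {d} (c : 'rV[R]_d.+1) : 'rV[R]_d := \row_i c 0 (lift ord0 i).

Lemma row_cons0 {d} a (c : 'rV[R]_d) : row_cons a c 0 ord0 = a.
Proof. by rewrite mxE unlift_none. Qed.

Lemma row_behead_cons {d} a (c : 'rV[R]_d) : row_behead (row_cons a c) = c.
Proof. by apply/rowP => i; rewrite !mxE liftK. Qed.

Lemma lc_recl {d} (w : 'I_d.+1 -> V) c :
  lc w c = c 0 ord0 *: w ord0 + lc (w \o lift ord0) (row_behead c).
Proof. by rewrite /lc big_ord_recl; congr (_ + _); apply: eq_bigr => i _; rewrite mxE. Qed.

Lemma lc_fam_cons {d} v (w : 'I_d -> V) c :
  lc (fam_cons v w) c = c 0 ord0 *: v + lc w (row_behead c).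
Proof.
rewrite lc_recl /fam_cons unlift_none /=; congr (_ + _).
by apply: eq_bigr => i _; rewrite /= liftK.
Qed.

Lemma lfree_fam_cons {d} v (w : 'I_d -> V) : lfree w -> ~ lspan w v -> lfree (fam_cons v w).
Proof.
move=> free v_notin c; rewrite lc_fam_cons => lc_eq0.
have c00 : c 0 ord0 = 0.
  apply: contra_notP v_notin => c0_neq0; exists (- (c 0 ord0)^-1 *: row_behead c).
  move/eqP: lc_eq0; rewrite addr_eq0 => /eqP v_eq.
  by rewrite lcZ scaleNr -scalerN -v_eq scalerA mulVf ?scale1r //; exact/eqP.
move: lc_eq0; rewrite c00 scale0r add0r => /free behead0.
apply/rowP => j; rewrite [RHS]mxE; have [i ->|->] := unliftP ord0 j; last exact: c00.
by have := congr1 (fun m : 'rV[R]_d => m 0 i) behead0; rewrite !mxE.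
Qed.

Lemma lspan_fam_cons {d k} (w : 'I_d -> V) (u : 'I_k.+1 -> V) :
  lspan w = lspan (u \o lift ord0) -> lspan (fam_cons (u ord0) w) = lspan u.
Proof.
move=> span_w; apply/seteqP; split => _ [c ->].
  have [c' e'] : lspan (u \o lift ord0) (lc w (row_behead c)).
    by rewrite -span_w; exists (row_behead c).
  by exists (row_cons (c 0 ord0) c'); rewrite lc_fam_cons lc_recl row_cons0 row_behead_cons e'.
have [c' e'] : lspan w (lc (u \o lift ord0) (row_behead c)).
  by rewrite span_w; exists (row_behead c).
by exists (row_cons (c 0 ord0) c'); rewrite lc_recl lc_fam_cons row_cons0 row_behead_cons e'.
Qed.

Lemma lspan_basis {k} (u : 'I_k -> V) :
  exists d (w : 'I_d -> V), lfree w /\ lspan w = lspan u.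
Proof.
elim: k u => [|k IH] u; first by exists 0%N, u; split => // c _; apply/rowP => -[].
have [d [w [free span_w]]] := IH (u \o lift ord0).
have [[a ua]|u0_notin] := pselect (lspan w (u ord0)); last first.
  by exists d.+1, (fam_cons (u ord0) w); split; [exact: lfree_fam_cons | exact: lspan_fam_cons].
exists d, w; split => //; apply/seteqP; split => _ [c ->].
  have [c' ->] : lspan (u \o lift ord0) (lc w c) by rewrite -span_w; exists c.
  by exists (row_cons 0 c'); rewrite lc_recl row_cons0 scale0r add0r row_behead_cons.
have [c' e'] : lspan w (lc (u \o lift ord0) (row_behead c)).
  by rewrite span_w; exists (row_behead c).
by exists (c 0 ord0 *: a + c'); rewrite lc_recl lcD lcZ -ua -e'.
Qed.

Lemma lc_famD {d} (u v : 'I_d -> V) c : lc (fun i => u i + v i) c = lc u c + lc v c.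
Proof. by rewrite /lc -big_split; apply: eq_bigr => i _; rewrite scalerDr. Qed.

Lemma findim_lspan {N : set V} : findim_subspace N -> exists k (v : 'I_k -> V), N = lspan v.
Proof.
move=> [k [v ->]]; exists k, v; apply/seteqP; split => _ [a ->].
  by exists (\row_i a i); apply: eq_bigr => i _; rewrite mxE.
by exists (fun i => a 0 i).
Qed.

End LinearCombinations.

Section ProductSpace.
Context {R : realType} {W : normedModType R} {n : nat}.
Context {lev : nat -> set W} {nrm : nat -> W -> R}.
Local Notation E := (@Espace R W n).
Local Notation El := (@Elev R W n lev).
Local Notation En := (@Enrm R W n nrm).
Local Notation Wsub := (@Wsub R W n).

Definition Einf : set E := [set x | forall m, El m x].

Lemma norm_on_Enrm {m} : norm_on (lev m) (nrm m) -> norm_on (El m) (En m).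
Proof.
move=> [lev_lin [nrm_ge0 [nrm_eq0 [nrmZ nrmD]]]].
split; [split|split; [|split; [|split]]].
- exact: lev_lin.1.
- by move=> a x y; exact: lev_lin.2.
- by move=> x _; rewrite /Enrm le_max normr_ge0.
- move=> [a b] Eb /eqP; rewrite /Enrm eq_le ge_max => /andP[/andP[a_le0 b_le0] _].
  have -> : a = 0 by apply/normr0_eq0/eqP; rewrite eq_le a_le0 normr_ge0.
  suff -> : b = 0 by [].
  by apply: nrm_eq0 => //; apply/eqP; rewrite eq_le b_le0 nrm_ge0.
- by move=> a x Ex; rewrite /Enrm /= normrZ nrmZ // maxr_pMr.
- move=> x y Ex Ey; rewrite /Enrm /= ge_max; apply/andP; split.
    by apply: le_trans (ler_normD _ _) _; apply: lerD; rewrite le_max lexx.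
  by apply: le_trans (nrmD _ _ Ex Ey) _; apply: lerD; rewrite le_max lexx orbT.
Qed.

Lemma Enrm_fst_le m x : `|x.1| <= En m x.
Proof. by rewrite /Enrm le_max lexx. Qed.

Lemma lin_subspace_Wsub : lin_subspace Wsub.
Proof. by split => // a x y; rewrite /Wsub /= => -> ->; rewrite scaler0 addr0. Qed.

Lemma fst_addW (x : E) {s : E} : Wsub s -> (x + s).1 = x.1.
Proof. by rewrite /Wsub /= => ->; rewrite addr0. Qed.

Lemma Cquad_fst {x y : E} : x.1 = y.1 -> Cquad x -> Cquad y.
Proof. by move=> xy Cx i; rewrite -xy; exact: Cx. Qed.

Lemma fst_lc d (w : 'I_d -> E) c : (lc w c).1 = c *m \matrix_i (w i).1.
Proof.
rewrite mulmx_sum_row /lc (big_morph (fun x : E => x.1) (fun _ _ => erefl) erefl).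
by apply: eq_bigr => i _; rewrite rowK.
Qed.

(* The coefficients of a vector of the span are recovered linearly from its R^n-component,
   through a pseudo-inverse of the matrix of R^n-components of the family. *)
Lemma lspan_Enrm_le_fst {m d} {t : 'I_d -> E} : norm_on (El m) (En m) ->
  (forall i, El m (t i)) -> (forall c, (lc t c).1 = 0 -> lc t c = 0) ->
  exists K, 0 < K /\ forall c, En m (lc t c) <= K * `|(lc t c).1|.
Proof.
move=> hEn Et transverse.
pose A := \matrix_i (t i).1; pose P := pinvmx A.
have sum_ge0 : 0 <= \sum_i En m (t i) by apply: sumr_ge0 => i _; exact: norm_on_ge0 hEn (Et i).
exists (mx_abs_sum P * \sum_i En m (t i) + 1); split.
  by rewrite ltr_wpDl // mulr_ge0 // mx_abs_sum_ge0.
move=> c; pose c' := (lc t c).1 *m P.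
have lc_c' : lc t c = lc t c'.
  apply/eqP; rewrite -subr_eq0 -lcB; apply/eqP/transverse.
  by rewrite fst_lc mulmxBl -fst_lc /c' fst_lc mulmxKpV ?subrr // submxMl.
rewrite {1}lc_c'; apply: le_trans (norm_on_lc_le c' hEn Et) _.
rewrite mulrDl mul1r mulrAC -[X in X <= _]addr0; apply: lerD => //.
by apply: ler_wpM2r => //; rewrite mulrC; exact: mx_norm_mulmx_le.
Qed.

Lemma alg_complement_lspan {k} {u : 'I_k -> E} {Nt M : set E} :
  lin_subspace M -> alg_complement Nt M (lspan u) -> exists t : 'I_k -> E, Nt = lspan t.
Proof.
move=> hM [hNt [NtN [NtM0 decomp]]].
have u_in i : lspan u (u i) by exists (delta_mx 0 i); rewrite lc_delta.
have [ts uts] := choice (fun i => decomp (u i) (u_in i)).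
have [s hs] := choice uts.
have Ntt i : Nt (ts i) := (hs i).1.
have Ms i : M (s i) := (hs i).2.1.
exists ts; apply/seteqP; split => [a Nta|_ [c ->]]; last exact: lin_subspace_lc c hNt Ntt.
have [c a_eq] := NtN a Nta; exists c.
have u_split : lc u c = lc ts c + lc s c.
  by rewrite -lc_famD; congr lc; apply/funext => i; exact: (hs i).2.2.
apply/eqP; rewrite -subr_eq0; apply/eqP/NtM0.
  exact: lin_subspaceB hNt Nta (lin_subspace_lc c hNt Ntt).
by rewrite a_eq u_split addrAC subrr add0r; exact: lin_subspace_lc c hM Ms.
Qed.

Section FiniteDimensional.
Hypothesis nrm_norm : forall m, norm_on (lev m) (nrm m).
Hypothesis lev0 : lev 0 = setT.

Lemma Elev0 (x : E) : El 0 x.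
Proof. by rewrite /Elev lev0. Qed.

Lemma findim_sc_subspace_Einf {N : set E} :
  findim_subspace N -> sc_subspace lev nrm N -> N `<=` Einf.
Proof.
move=> /findim_lspan [k [v ->]] [_ [_ dense]].
have [d [w [free span_w]]] := lspan_basis v; rewrite -span_w in dense *.
have hE0 := norm_on_Enrm (nrm_norm 0%N).
have [K [K0 coordK]] := lfree_coord_bounded hE0 (fun i => Elev0 (w i)) free.
pose S := [set c : 'rV[R]_d | Einf (lc w c)].
have hS : lin_subspace S.
  split => [m|a c c' Sc Sc' m]; first by rewrite lc0; exact: (norm_on_Enrm (nrm_norm m)).1.1.
  by rewrite lcD lcZ; apply: (norm_on_Enrm (nrm_norm m)).1.2; [exact: Sc | exact: Sc'].
suff S_full : forall c, S c by move=> _ [c ->]; exact: S_full.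
apply: dense_lin_subspace_rV => // c e e0.
have [_ [[t ->] [Et close]]] :=
  dense 0%N (lc w c) (ex_intro _ c erefl) (Elev0 _) (e / K) (divr_gt0 e0 K0).
exists t; split => //; apply: le_lt_trans (coordK (t - c)) _.
by rewrite lcB (norm_on_distC hE0 (Elev0 _) (Elev0 _)) -ltr_pdivlMl // mulrC.
Qed.

End FiniteDimensional.

End ProductSpace.

Section GoodPosition.
Context {R : realType} {W : normedModType R} {n : nat}.
Context {lev : nat -> set W} {nrm : nat -> W -> R}.
Local Notation E := (@Espace R W n).
Local Notation El := (@Elev R W n lev).
Local Notation En := (@Enrm R W n nrm).
Local Notation Einf := (@Einf R W n lev).

Context {N Np Nt : set E}.
Local Notation M := (N `&` @Wsub R W n).

Hypothesis nrm_norm : forall m, norm_on (lev m) (nrm m).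
Hypothesis lev0 : lev 0 = setT.
Hypothesis N_findim : findim_subspace N.
Hypothesis N_good : good_complement lev nrm N Np.
Hypothesis Nt_compl : alg_complement Nt M N.

Let Enrm_norm m : norm_on (El m) (En m) := norm_on_Enrm (nrm_norm m).
Let N_lin : lin_subspace N := N_good.1.1.1.
Let N_closed : forall m (u : nat -> E) x, (forall i, N (u i) /\ El m (u i)) ->
  El m x -> conv_in (En m) u x -> N x := N_good.1.1.2.1.
Let Np_lin : lin_subspace Np := N_good.1.2.1.1.
Let Np_dense : forall m x, Np x -> El m x -> forall e, 0 < e ->
  exists y, Np y /\ (forall k, El k y) /\ En m (x - y) < e := N_good.1.2.1.2.2.
Let N_Np0 : forall x, N x -> Np x -> x = 0 := N_good.1.2.2.1.
Let N_Np_split m : forall x, El m x ->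
  exists a b, N a /\ El m a /\ Np b /\ El m b /\ x = a + b := (N_good.1.2.2.2 m).1.
Let Nt_lin : lin_subspace Nt := Nt_compl.1.
Let Nt_sub : Nt `<=` N := Nt_compl.2.1.
Let Nt_M0 : forall x, Nt x -> M x -> x = 0 := Nt_compl.2.2.1.
Let N_decomp : forall x, N x -> exists a b, Nt a /\ M b /\ x = a + b := Nt_compl.2.2.2.

Lemma N_Einf : N `<=` Einf.
Proof. exact: (findim_sc_subspace_Einf nrm_norm lev0 N_findim N_good.1.1). Qed.

Lemma M_lin : lin_subspace M.
Proof. exact: lin_subspaceI N_lin lin_subspace_Wsub. Qed.

Lemma N_proj_bounded m : exists K, 0 <= K /\ forall a b, N a -> Np b -> El m a -> El m b ->
  En m a <= K * En m (a + b).
Proof.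
have [K hK] := (N_good.1.2.2.2 m).2.
exists `|K|; split => // a b Na Npb Ea Eb.
apply: le_trans (hK a b Na Npb Ea Eb) _; apply: ler_wpM2r (ler_norm K).
exact: norm_on_ge0 (Enrm_norm m) (lin_subspaceD (Enrm_norm m).1 Ea Eb).
Qed.

Lemma Nt_Enrm_le_fst m : exists K, 0 < K /\ forall a, Nt a -> En m a <= K * `|a.1|.
Proof.
have [k [u N_eq]] := findim_lspan N_findim.
have compl : alg_complement Nt M (lspan u) by rewrite -N_eq.
have [t Nt_eq] := alg_complement_lspan M_lin compl.
have Ntt i : Nt (t i) by rewrite Nt_eq; exists (delta_mx 0 i); rewrite lc_delta.
have transverse c : (lc t c).1 = 0 -> lc t c = 0.
  move=> fst0; have Nt_c : Nt (lc t c) by rewrite Nt_eq; exists c.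
  exact: Nt_M0 _ Nt_c (conj (Nt_sub _ Nt_c) fst0).
have [K [K0 hK]] :=
  lspan_Enrm_le_fst (Enrm_norm m) (fun i => N_Einf _ (Nt_sub _ (Ntt i)) m) transverse.
by exists K; split => // a; rewrite Nt_eq => -[c ->]; exact: hK.
Qed.

Lemma sc_subspace_Nt : sc_subspace lev nrm Nt.
Proof.
split; [exact: Nt_lin | split => [m u x Ntu Ex ux|m x Ntx Ex e e0]]; last first.
  exists x; split => //; split; first exact: N_Einf _ (Nt_sub _ Ntx).
  by rewrite subrr (norm_on0 (Enrm_norm m)).
have Nx : N x.
  apply: (N_closed m u x _ Ex ux) => i.
  by split; [exact: Nt_sub _ (Ntu i).1 | exact: (Ntu i).2].
have [a [b [Nta [Mb x_eq]]]] := N_decomp x Nx.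
suff b0 : b = 0 by rewrite x_eq b0 addr0.
have Ea := N_Einf _ (Nt_sub _ Nta) m; have Eb := N_Einf _ Mb.1 m.
have [K [K0 hK]] := Nt_Enrm_le_fst m.
apply: (norm_on_eq0 (Enrm_norm m) Eb); apply/eqP.
rewrite eq_le (norm_on_ge0 (Enrm_norm m) Eb) andbT.
apply: (conv_in_le0 (K := 1 + K) _ ux) => [|i]; first by rewrite addr_ge0 // ltW.
have Eu := (Ntu i).2.
have Exu : El m (x - u i) by apply: lin_subspaceB (Enrm_norm m).1 Ex Eu.
have Eua : El m (u i - a) by apply: lin_subspaceB (Enrm_norm m).1 Eu Ea.
have -> : b = (x - u i) + (u i - a) by rewrite x_eq addrA subrK addrC addKr.
rewrite mulrDl mul1r; apply: le_trans (norm_onD (Enrm_norm m) Exu Eua) (lerD _ _).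
  by rewrite (norm_on_distC (Enrm_norm m) Ex Eu).
apply: le_trans (hK _ (lin_subspaceB Nt_lin (Ntu i).1 Nta)) (ler_wpM2l (ltW K0) _).
have -> : (u i - a).1 = (u i - x).1 by rewrite x_eq /= Mb.2 addr0.
exact: Enrm_fst_le.
Qed.

Lemma sc_subspace_MNp : sc_subspace lev nrm (set_sum M Np).
Proof.
split; [exact: lin_subspace_set_sum M_lin Np_lin | split].
- move=> m u x MNpu Ex ux.
  have [a [b [Na [Ea [Npb [Eb x_eq]]]]]] := N_Np_split m x Ex.
  exists a, b; split; [split => // | by []]; rewrite /Wsub /=.
  have [K [K0 hK]] := N_proj_bounded m.
  apply/eqP; rewrite -normr_le0; apply: (conv_in_le0 K0 ux) => i.
  have [s [p [Ms [Npp u_eq]]]] := (MNpu i).1.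
  have Es := N_Einf _ Ms.1 m.
  have Ep : El m p by apply: lin_subspaceDl (Enrm_norm m).1 Es _; rewrite -u_eq; exact: (MNpu i).2.
  have -> : a.1 = (a - s).1 by rewrite /= Ms.2 subr0.
  apply: le_trans (Enrm_fst_le m _) _.
  rewrite (norm_on_distC (Enrm_norm m) (MNpu i).2 Ex).
  have -> : x - u i = (a - s) + (b - p) by rewrite x_eq u_eq opprD addrACA.
  apply: hK; [exact: lin_subspaceB N_lin Na Ms.1 | exact: lin_subspaceB Np_lin Npb Npp |
    exact: lin_subspaceB (Enrm_norm m).1 Ea Es | exact: lin_subspaceB (Enrm_norm m).1 Eb Ep].
- move=> m _ [s [p [Ms [Npp ->]]]] Ex e e0.
  have Es := N_Einf _ Ms.1 m.
  have Ep : El m p := lin_subspaceDl (Enrm_norm m).1 Es Ex.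
  have [y [Npy [Ey close]]] := Np_dense m p Npp Ep e e0.
  exists (s + y); split; first by exists s, y.
  split; first by move=> k; exact: lin_subspaceD (Enrm_norm k).1 (N_Einf _ Ms.1 k) (Ey k).
  by rewrite opprD addrACA subrr add0r.
Qed.

Lemma Nt_MNp0 x : Nt x -> set_sum M Np x -> x = 0.
Proof.
move=> Ntx [s [p [Ms [Npp x_eq]]]].
have Np_p : N p by apply: lin_subspaceDl N_lin Ms.1 _; rewrite -x_eq; exact: Nt_sub.
by move: Ntx; rewrite x_eq (N_Np0 _ Np_p Npp) addr0 => Nts; exact: Nt_M0 _ Nts Ms.
Qed.

Lemma Nt_MNp_split m :
  (forall x, El m x -> exists a b, Nt a /\ El m a /\ set_sum M Np b /\ El m b /\ x = a + b) /\
  (exists K, forall a b, Nt a -> set_sum M Np b -> El m a -> El m b ->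
     En m a <= K * En m (a + b)).
Proof.
split.
  move=> x Ex; have [a [b [Na [Ea [Npb [Eb ->]]]]]] := N_Np_split m x Ex.
  have [t [s [Ntt [Ms ->]]]] := N_decomp a Na.
  have Es := N_Einf _ Ms.1 m.
  exists t, (s + b); split => //; split; first exact: N_Einf _ (Nt_sub _ Ntt) m.
  split; first by exists s, b.
  by split; [exact: lin_subspaceD (Enrm_norm m).1 Es Eb | rewrite addrA].
have [K [K0 hK]] := N_proj_bounded m; have [K2 [K2_0 hK2]] := Nt_Enrm_le_fst m.
exists (K2 * K) => a _ Nta [s [p [Ms [Npp ->]]]] Ea Eb.
have Es := N_Einf _ Ms.1 m.
have Ep : El m p := lin_subspaceDl (Enrm_norm m).1 Es Eb.
apply: le_trans (hK2 a Nta) _; rewrite -mulrA; apply: ler_wpM2l; first exact: ltW.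
rewrite -(fst_addW a Ms.2) addrA; apply: le_trans (Enrm_fst_le m _) _.
apply: hK => //; first exact: lin_subspaceD N_lin (Nt_sub _ Nta) Ms.1.
exact: lin_subspaceD (Enrm_norm m).1 Ea Es.
Qed.

Lemma sc_complement_Nt : sc_complement lev nrm Nt (set_sum M Np).
Proof.
split; first exact: sc_subspace_Nt.
split; first exact: sc_subspace_MNp.
by split; [exact: Nt_MNp0 | exact: Nt_MNp_split].
Qed.

Lemma good_complement_Nt : good_complement lev nrm Nt (set_sum M Np).
Proof.
split; first exact: sc_complement_Nt.
have [c [c0 N_good_c]] := N_good.2.
have [K [K0 hK]] := N_proj_bounded 0; have [K2 [K2_0 hK2]] := Nt_Enrm_le_fst 0.
have K1_gt0 : 0 < 1 + K by rewrite ltr_pwDl.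
pose c' := c / ((1 + K) * K2).
have c'_gt0 : 0 < c' by rewrite divr_gt0 // mulr_gt0.
exists c'; split => // a _ Nta [s [p [Ms [Npp ->]]]] small.
have Na := Nt_sub _ Nta; have Nas := lin_subspaceD N_lin Na Ms.1.
have fst_as : (a + s).1 = a.1 := fst_addW a Ms.2.
have p_le : En 0 p <= (1 + K) * En 0 (s + p).
  have Es := Elev0 lev0 s; have Esp := Elev0 lev0 (s + p).
  rewrite -{1}(addKr s p).
  apply: le_trans (norm_onD (Enrm_norm 0) (lin_subspaceN (Enrm_norm 0).1 Es) Esp) _.
  rewrite (norm_onN (Enrm_norm 0) Es) mulrDl mul1r addrC lerD2l.
  exact: hK Ms.1 Npp Es (Elev0 lev0 p).
have a_le : En 0 a <= K2 * En 0 (a + s).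
  apply: le_trans (hK2 a Nta) _; rewrite -fst_as.
  by apply: ler_wpM2l (Enrm_fst_le 0 _); exact: ltW.
have p_small : En 0 p <= c * En 0 (a + s).
  apply: le_trans p_le _.
  have -> : c * En 0 (a + s) = (1 + K) * (c' * (K2 * En 0 (a + s))).
    by rewrite /c'; field; rewrite !gt_eqF.
  apply: ler_wpM2l; first exact: ltW.
  by apply: le_trans small _; apply: ler_wpM2l; first exact: ltW.
rewrite addrA; apply: iff_trans (N_good_c _ _ Nas Npp p_small) _.
by split; apply: Cquad_fst; rewrite fst_as.
Qed.

Lemma nonempty_interior_Nt : nonempty_interior_in nrm N -> nonempty_interior_in nrm Nt.
Proof.
move=> [x [Nx [Cx [r [r0 ball_C]]]]].
have [a [b [Nta [Mb x_eq]]]] := N_decomp x Nx.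
have fst_x : x.1 = a.1 by rewrite x_eq fst_addW //; exact: Mb.2.
exists a; split => //; split; first exact: Cquad_fst fst_x Cx.
exists r; split => // y Nty yr.
apply: (Cquad_fst (fst_addW y Mb.2)); apply: ball_C.
  exact: lin_subspaceD N_lin (Nt_sub _ Nty) Mb.1.
by rewrite x_eq opprD addrACA subrr addr0.
Qed.

End GoodPosition.

Theorem lemma6p7 (R : realType) (W : normedModType R) (n : nat)
  (lev : nat -> set W) (nrm : nat -> W -> R)
  (N Nperp Nt : set (@Espace R W n)) :
  sc_structure lev nrm ->
  findim_subspace N ->
  nonempty_interior_in nrm N ->
  good_complement lev nrm N Nperp ->
  alg_complement Nt (N `&` @Wsub R W n) N ->
  good_position lev nrm Nt /\
  good_complement lev nrm Nt (set_sum (N `&` @Wsub R W n) Nperp).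
Proof.
move=> [lev0 [_ [lev_banach _]]] N_findim N_int N_good Nt_compl.
have nrm_norm m : norm_on (lev m) (nrm m) := (lev_banach m).1.
have Nt_good := good_complement_Nt nrm_norm lev0 N_findim N_good Nt_compl.
split; last exact: Nt_good.
split; last by exists (set_sum (N `&` @Wsub R W n) Nperp).
exact: nonempty_interior_Nt N_good Nt_compl N_int.
Qed.
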